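(* The following three assignment rules are majoritarian: (1) the rule $\mathit{PO}$ returning all Pareto-optimal assignments; (2) least unpopularity, returning all assignments minimizing the unpopularity margin; (3) mixed popularity, returning all assignments that lie in the support of some mixed popular distribution.
   Context: Let $N=\{1,\dots,n\}$ be agents and $H$ a set of $n$ houses. A profile $P=(\succ_1,\dots,\succ_n)$ gives each agent a strict linear order on $H$. An assignment is a bijection $\mu:N\to H$; $M$ is the set of all assignments. Agent $x$ weakly prefers $\mu$ to $\lambda$ if $\mu(x)\succ_x\lambda(x)$ or $\mu(x)=\lambda(x)$, and strictly prefers it if $\mu(x)\succ_x\lambda(x)$. Let $N_{\mu,\lambda}$ be the set of agents weakly preferring $\mu$ to $\lambda$; $\mu\succsim\lambda$ if $|N_{\mu,\lambda}|\ge|N_{\lambda,\mu}|$. The majority graph of $P$ is $G_P=(M,\{(\mu,\lambda):\mu\succsim\lambda\})$. An assignment rule $F$ maps every profile $P$ to a nonempty set $F(P)\subseteq M$; it is majoritarian if $F(P)=F(P')$ for all profiles $P,P'$ with $G_P=G_{P'}$. $\mu$ Pareto-dominates $\lambda$ if every agent weakly prefers $\mu$ to $\lambda$ and some agent strictly prefers $\mu$ to $\lambda$; $\mu$ is Pareto-optimal if no assignment Pareto-dominates it. The unpopularity margin of $\mu$ is $\max_{\lambda\in M}(|N_{\lambda,\mu}|-|N_{\mu,\lambda}|)$; least unpopularity returns all assignments minimizing it. A probability distribution $\pi$ on $M$ is mixed popular if for every $\lambda\in M$, $\sum_{\mu\in M}\pi(\mu)\,(|N_{\mu,\lambda}|-|N_{\lambda,\mu}|)\ge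 0$; mixed popularity returns all assignments $\mu$ with $\pi(\mu)>0$ for some mixed popular $\pi$. *)

From HB Require Import structures.
From mathcomp Require Import all_boot all_order all_algebra.
Set Implicit Arguments. Unset Strict Implicit. Unset Printing Implicit Defensive.
Import Order.TTheory GRing.Theory Num.Theory.

Section HouseAllocation.
Variables (n : nat) (H : finType).

(* An assignment: an injective map agents -> houses (a bijection when #|H| = n). *)
Definition assignment := {f : {ffun 'I_n -> H} | injectiveb f}.

Definition asg (mu : assignment) (x : 'I_n) : H := (val mu) x.

(* A profile: for each agent x, a relation  pref x a b  meaning  a ≻_x b. *)
Definition profile := 'I_n -> rel H.

Definition strict_linear_order (r : rel H) : Prop :=
  irreflexive r /\ transitive r /\ (forall a b, a != b -> r a b || r b a).

Definition valid_profile (P : profile) : Prop :=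
  forall x, strict_linear_order (P x).

Definition weakly_prefers (P : profile) (x : 'I_n) (mu lam : assignment) : bool :=
  P x (asg mu x) (asg lam x) || (asg mu x == asg lam x).

Definition strictly_prefers (P : profile) (x : 'I_n) (mu lam : assignment) : bool :=
  P x (asg mu x) (asg lam x).

Definition Nset (P : profile) (mu lam : assignment) : {set 'I_n} :=
  [set x | weakly_prefers P x mu lam].

(* edge (mu, lam) of the majority graph G_P, i.e. mu ≿ lam *)
Definition maj_edge (P : profile) (mu lam : assignment) : bool :=
  #|Nset P lam mu| <= #|Nset P mu lam|.

Definition rule := profile -> assignment -> Prop.

Definition majoritarian (F : rule) : Prop :=
  forall P P' : profile, valid_profile P -> valid_profile P' ->
    (forall mu lam, maj_edge P mu lam = maj_edge P' mu lam) ->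
    forall mu, F P mu <-> F P' mu.

Definition pareto_dominates (P : profile) (mu lam : assignment) : Prop :=
  (forall x, weakly_prefers P x mu lam) /\ (exists x, strictly_prefers P x mu lam).

Definition pareto_optimal (P : profile) (mu : assignment) : Prop :=
  ~ exists lam, pareto_dominates P lam mu.

Definition PO : rule := pareto_optimal.

(* (2) unpopularity margin: max over lam of |N_{lam,mu}| - |N_{mu,lam}|.
   The fold starts at 0, which does not change the maximum since lam = mu gives 0. *)
Definition unpopularity_margin (P : profile) (mu : assignment) : int :=
  \big[Num.max/0%R]_(lam : assignment)
     ((#|Nset P lam mu|)%:Z - (#|Nset P mu lam|)%:Z)%R.

Definition least_unpopularity : rule := fun P mu =>
  forall nu : assignment, (unpopularity_margin P mu <= unpopularity_margin P nu)%R.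

Definition is_distribution (R : realFieldType) (pi : assignment -> R) : Prop :=
  (forall mu, 0 <= pi mu)%R /\ (\sum_(mu : assignment) pi mu = 1)%R.

Definition mixed_popular (R : realFieldType) (P : profile) (pi : assignment -> R) : Prop :=
  is_distribution pi /\
  forall lam : assignment,
    (0 <= \sum_(mu : assignment)
            pi mu * ((#|Nset P mu lam|)%:R - (#|Nset P lam mu|)%:R))%R.

Definition mixed_popularity (R : realFieldType) : rule := fun P mu =>
  exists pi : assignment -> R, mixed_popular P pi /\ (0 < pi mu)%R.

End HouseAllocation.

(* Write the margin |N_{mu,lam}| - |N_{lam,mu}| as the sum over agents x of
   votes v_x(mu x, lam x) in {-1, 0, 1}.  The three rules only depend on the
   cardinalities |N_{mu,lam}|, which are determined by the margins because
   |N_{mu,lam}| + |N_{lam,mu}| = n + #{x | mu x = lam x}.  If P and P'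
   have the same majority graph, all margins have the same signs.  Comparing an
   assignment with the one obtained by swapping two agents shows that the vote
   difference d_x(a, b) = v_x(a, b) - v'_x(a, b) does not depend on x; comparing
   the rotations of a 3-cycle of agents shows that d is additive along triangles,
   so d(a, b) = f a - f b for some potential f.  Since assignments are bijections,
   the margins of P and P' then differ by sum_x f (mu x) - sum_x f (lam x) = 0. *)

From mathcomp Require Import all_boot all_order all_algebra.
From mathcomp Require Import perm zify.
Set Implicit Arguments. Unset Strict Implicit. Unset Printing Implicit Defensive.
Import Order.TTheory GRing.Theory Num.Theory.
Local Open Scope ring_scope.

Section Votes.
Variables (H : finType) (r : rel H).

Definition vote (a b : H) : int := (r a b)%:Z - (r b a)%:Z.

Lemma voteN a b : vote b a = - vote a b.
Proof. by rewrite /vote opprB. Qed.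

Lemma vote_refl a : vote a a = 0.
Proof. by rewrite /vote subrr. Qed.

Hypothesis r_slo : strict_linear_order r.

Lemma slo_ltNge a b : r a b = ~~ (r b a || (b == a)).
Proof.
have [irr [trans total]] := r_slo.
have [<-|ab] := eqVneq a b; first by rewrite irr.
rewrite orbF.
case rab: (r a b); last by move: (total _ _ ab); rewrite rab => /= ->.
by apply/esym/negP => rba; move: (trans _ _ _ rab rba); rewrite irr.
Qed.

Lemma slo_flip a b : a != b -> r b a = ~~ r a b.
Proof. by move=> ab; rewrite (slo_ltNge b) (negbTE ab) orbF. Qed.

Lemma vote_pm1 a b : a != b -> `|vote a b| = 1.
Proof. by move=> ab; rewrite /vote (slo_flip ab); case: (r a b). Qed.

Lemma vote_cycle a b c : a != b -> b != c -> c != a ->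
  `|vote a b + vote b c + vote c a| = 1.
Proof.
move=> ab bc ca; have [_ [trans _]] := r_slo.
rewrite /vote (slo_flip ab) (slo_flip bc) (slo_flip ca).
case rab: (r a b); case rbc: (r b c); case rca: (r c a) => //.
- by move: (trans _ _ _ rab rbc); rewrite (slo_flip ca) rca.
- by move: (trans b c a); rewrite (slo_flip bc) (slo_flip ab) rbc rab rca => /(_ isT isT).
Qed.

Lemma weak_total a b : (r a b || (a == b)) || (r b a || (b == a)).
Proof. by rewrite slo_ltNge; case: (r b a || (b == a)); rewrite ?orbT. Qed.

Lemma weak_antisym a b : (r a b || (a == b)) && (r b a || (b == a)) = (a == b).
Proof.
have [<-|ab] := eqVneq a b; first by rewrite !orbT.
by rewrite !orbF (slo_flip ab) andbN.
Qed.

End Votes.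

Section Assignments.
Variables (n : nat) (H : finType).
Implicit Types (mu : assignment n H) (x y : 'I_n).

Lemma asg_inj mu : injective (asg mu).
Proof. exact/injectiveP/(valP mu). Qed.

Lemma relabel_subproof mu (s : {perm 'I_n}) : injectiveb [ffun x => asg mu (s x)].
Proof.
by apply/injectiveP => x y; rewrite !ffunE => /asg_inj/perm_inj.
Qed.

Definition relabel mu (s : {perm 'I_n}) : assignment n H :=
  exist (fun f : {ffun _} => injectiveb f) _ (relabel_subproof mu s).

Lemma asg_relabel mu s x : asg (relabel mu s) x = asg mu (s x).
Proof. by rewrite /asg ffunE. Qed.

Definition cycle3 (x1 x2 x3 : 'I_n) : {perm 'I_n} := tperm x1 x2 * tperm x1 x3.

Lemma cycle3E x1 x2 x3 : x1 != x2 -> x2 != x3 -> x3 != x1 ->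
  [/\ cycle3 x1 x2 x3 x1 = x2, cycle3 x1 x2 x3 x2 = x3 & cycle3 x1 x2 x3 x3 = x1].
Proof.
move=> x12 x23 x31; rewrite !permM tpermL tpermR tpermL.
by rewrite (@tpermD _ x1 x3 x2) ?(@tpermD _ x1 x2 x3) ?tpermR // eq_sym.
Qed.

Hypothesis card_H : #|H| = n.

Lemma asg_bij mu : bijective (asg mu).
Proof. by apply: inj_card_bij (@asg_inj mu) _; rewrite card_ord card_H. Qed.

Lemma asg_onto mu h : exists x, asg mu x = h.
Proof. by have [g _ gK] := asg_bij mu; exists (g h). Qed.

Lemma sum_asg (V : nmodType) (F : H -> V) mu : \sum_x F (asg mu x) = \sum_h F h.
Proof. by rewrite (reindex (asg mu)) //; apply: onW_bij; apply: asg_bij. Qed.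

Lemma enum_asg_subproof :
  injectiveb [ffun x : 'I_n => enum_val (cast_ord (esym card_H) x)].
Proof.
by apply/injectiveP => x y; rewrite !ffunE => /enum_val_inj/cast_ord_inj.
Qed.

Definition enum_asg : assignment n H :=
  exist (fun f : {ffun _} => injectiveb f) _ enum_asg_subproof.

Lemma exists_asg_at mu x h : exists nu, asg nu x = h /\
  forall y, y != x -> asg mu y != h -> asg nu y = asg mu y.
Proof.
have [z muz] := asg_onto mu h.
exists (relabel mu (tperm x z)); rewrite asg_relabel tpermL; split=> // y yx.
rewrite asg_relabel -muz => muy.
by rewrite tpermD 1?eq_sym //; apply: contraNneq muy => ->.
Qed.

Lemma exists_asg2 x y a b : x != y -> a != b ->
  exists mu, asg mu x = a /\ asg mu y = b.
Proof.
move=> xy ab; have [mu1 [mu1x _]] := exists_asg_at enum_asg x a.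
have [mu2 [mu2y mu2E]] := exists_asg_at mu1 y b.
by exists mu2; rewrite mu2E // mu1x.
Qed.

End Assignments.

Section Margins.
Variables (n : nat) (H : finType) (P : profile n H).
Implicit Types (mu lam : assignment n H) (x y : 'I_n).

Definition margin mu lam : int := #|Nset P mu lam|%:Z - #|Nset P lam mu|%:Z.

Lemma marginN mu lam : margin lam mu = - margin mu lam.
Proof. by rewrite /margin opprB. Qed.

Lemma maj_edgeE mu lam : maj_edge P mu lam = (0 <= margin mu lam).
Proof. by rewrite /maj_edge /margin subr_ge0 lez_nat. Qed.

Lemma marginE mu lam : margin mu lam = \sum_x vote (P x) (asg mu x) (asg lam x).
Proof.
have cardE (A : {set 'I_n}) : #|A|%:Z = \sum_x (x \in A)%:Z.
  by rewrite -sum1_card big_mkcond /= -natz natr_sum; apply: eq_bigr => x _; case: (x \in A).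
rewrite /margin !cardE -sumrB; apply: eq_bigr => x _; rewrite !inE /weakly_prefers.
have [->|_] := eqVneq (asg mu x) (asg lam x); last by rewrite !orbF.
by rewrite vote_refl !orbT subrr.
Qed.

Lemma margin_supported (s : seq 'I_n) mu lam : uniq s ->
  (forall x, x \notin s -> asg mu x = asg lam x) ->
  margin mu lam = \sum_(x <- s) vote (P x) (asg mu x) (asg lam x).
Proof.
move=> s_uniq agree; rewrite marginE [RHS]big_uniq // [LHS](bigID (mem s)) /=.
by rewrite [X in _ + X]big1 ?addr0 // => x /agree ->; apply: vote_refl.
Qed.

Lemma margin_tperm mu x y : x != y ->
  margin mu (relabel mu (tperm x y)) =
  vote (P x) (asg mu x) (asg mu y) + vote (P y) (asg mu y) (asg mu x).
Proof.
move=> xy; rewrite (margin_supported (s := [:: x; y])) /=; last first.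
- by move=> z; rewrite !inE negb_or asg_relabel => /andP[zx zy]; rewrite tpermD // eq_sym.
- by rewrite inE xy.
by rewrite !big_cons big_nil addr0 !asg_relabel tpermL tpermR.
Qed.

Lemma margin_cycle3 mu x1 x2 x3 : x1 != x2 -> x2 != x3 -> x3 != x1 ->
  margin mu (relabel mu (cycle3 x1 x2 x3)) = vote (P x1) (asg mu x1) (asg mu x2)
    + vote (P x2) (asg mu x2) (asg mu x3) + vote (P x3) (asg mu x3) (asg mu x1).
Proof.
move=> x12 x23 x31; have [c1 c2 c3] := cycle3E x12 x23 x31.
rewrite (margin_supported (s := [:: x1; x2; x3])) /=; last first.
- move=> z; rewrite !inE !negb_or asg_relabel => /and3P[z1 z2 z3].
  by rewrite !permM !tpermD // eq_sym.
- by rewrite !inE negb_or x12 x23 eq_sym x31.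
by rewrite !big_cons big_nil addr0 !asg_relabel c1 c2 c3 addrA.
Qed.

Hypothesis vP : valid_profile P.

Lemma Nset_cardD mu lam :
  (#|Nset P mu lam| + #|Nset P lam mu| = n + #|[set x | asg mu x == asg lam x]|)%N.
Proof.
rewrite -cardsUI; have -> : Nset P mu lam :|: Nset P lam mu = setT.
  by apply/setP => x; rewrite !inE /weakly_prefers (weak_total (vP x)).
have -> : Nset P mu lam :&: Nset P lam mu = [set x | asg mu x == asg lam x].
  by apply/setP => x; rewrite !inE /weakly_prefers (weak_antisym (vP x)).
by rewrite cardsT card_ord.
Qed.

Lemma pareto_dominatesE lam mu : pareto_dominates P lam mu <->
  #|Nset P lam mu| = n /\ (#|Nset P mu lam| < n)%N.
Proof.
have setT_card (A : {set 'I_n}) : (A == setT) = (#|A| == n).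
  have /= := max_card (mem A); rewrite card_ord => An.
  by rewrite eqEcard subsetT cardsT card_ord eqn_leq An.
have allT (A : {set 'I_n}) : (forall x, x \in A) <-> #|A| = n.
  split=> [allA | /eqP]; last by rewrite -setT_card => /eqP-> x; rewrite inE.
  by apply/eqP; rewrite -setT_card; apply/eqP/setP => x; rewrite allA inE.
have someN (B : {set 'I_n}) : (exists x, x \notin B) <-> (#|B| < n)%N.
  have /= := max_card (mem B); rewrite card_ord ltn_neqAle => ->; rewrite andbT -setT_card.
  split=> [[x]|]; first by apply: contraNneq => ->; rewrite inE.
  by rewrite eqEsubset subsetT /= => /subsetPn[x _ xB]; exists x.
have strictE x : strictly_prefers P x lam mu = (x \notin Nset P mu lam).
  by rewrite inE /strictly_prefers /weakly_prefers -(slo_ltNge (vP x)).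
split=> [[allw [x sx]] | [/allT allw /someN[x xB]]].
  by split; [apply/allT => y; rewrite inE | apply/someN; exists x; rewrite -strictE].
by split=> [y|]; [move: (allw y); rewrite inE | exists x; rewrite strictE].
Qed.

End Margins.

Definition vote_diff n H (P P' : profile n H) (x : 'I_n) (a b : H) : int :=
  vote (P x) a b - vote (P' x) a b.

Lemma vote_diffN n H (P P' : profile n H) x a b :
  vote_diff P P' x b a = - vote_diff P P' x a b.
Proof. rewrite /vote_diff !(voteN _ a); lia. Qed.

Lemma vote_diff_refl n H (P P' : profile n H) x a : vote_diff P P' x a a = 0.
Proof. by rewrite /vote_diff !vote_refl subrr. Qed.

Lemma pm1_sum3_drop2 (x y z x' y' z' : int) :
  `|x| = 1 -> `|y| = 1 -> `|z| = 1 -> `|x'| = 1 -> `|y'| = 1 -> `|z'| = 1 ->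
  x + y + z = x' + y' + z' + 2 -> (0 <= x + y + z) = (0 <= x' + y' + z') ->
  x + y + z \in [:: -1; 3].
Proof. rewrite !inE; lia. Qed.

Section SameMajorityGraph.
Variables (n : nat) (H : finType).
Hypothesis card_H : #|H| = n.
Variables P P' : profile n H.
Hypotheses (vP : valid_profile P) (vP' : valid_profile P').
Hypothesis same_graph : forall mu lam, maj_edge P mu lam = maj_edge P' mu lam.

Lemma margin_ge0_eq mu lam : (0 <= margin P mu lam) = (0 <= margin P' mu lam).
Proof. by rewrite -!maj_edgeE. Qed.

(* Swapping the houses of x and y changes the margin by
   [vote x a b - vote y a b], a value in {-2, 0, 2} that is fixed by its sign. *)
Lemma vote_diff_agent x y a b : vote_diff P P' x a b = vote_diff P P' y a b.
Proof.
have [<-|ab] := eqVneq a b; first by rewrite !vote_diff_refl.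
have [<-//|xy] := eqVneq x y.
have [mu [mux muy]] := exists_asg2 card_H xy ab.
pose tau := relabel mu (tperm x y).
have margin_tau Q : margin Q mu tau = vote (Q x) a b - vote (Q y) a b.
  by rewrite margin_tperm // mux muy (voteN _ a).
have := margin_ge0_eq mu tau; have := margin_ge0_eq tau mu.
rewrite !(marginN _ mu tau) !margin_tau /vote_diff.
have := vote_pm1 (vP x) ab; have := vote_pm1 (vP y) ab.
have := vote_pm1 (vP' x) ab; have := vote_pm1 (vP' y) ab.
lia.
Qed.

(* If the defect were 2, the cyclic vote [v(a,b) + v(b,c) + v(c,a)] of every
   agent would be 1 in P.  Each of the three rotation tests drops by 2 from P to
   P' without changing sign, hence is -1 or 3 in P; but the three tests add up
   to the cyclic votes of three agents, i.e. to 3. *)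
Lemma cycle_defect_neq2 x a b c : a != b -> b != c -> c != a ->
  vote_diff P P' x a b + vote_diff P P' x b c + vote_diff P P' x c a != 2.
Proof.
move=> ab bc ca; apply/eqP => defect.
have defect_at y1 y2 y3 :
    vote_diff P P' y1 a b + vote_diff P P' y2 b c + vote_diff P P' y3 c a = 2.
  by rewrite (vote_diff_agent y1 x) (vote_diff_agent y2 x) (vote_diff_agent y3 x).
have cycle_vote1 y : vote (P y) a b + vote (P y) b c + vote (P y) c a = 1.
  have := vote_cycle (vP y) ab bc ca; have := vote_cycle (vP' y) ab bc ca.
  by have := defect_at y y y; rewrite /vote_diff; lia.
pose mu := enum_asg card_H.
have [x1 mu1] := asg_onto card_H mu a.
have [x2 mu2] := asg_onto card_H mu b.
have [x3 mu3] := asg_onto card_H mu c.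
have x12 : x1 != x2 by apply: contra_neq ab => e; rewrite -mu1 -mu2 e.
have x23 : x2 != x3 by apply: contra_neq bc => e; rewrite -mu2 -mu3 e.
have x31 : x3 != x1 by apply: contra_neq ca => e; rewrite -mu3 -mu1 e.
have [s1 s2 s3] := cycle3E x12 x23 x31.
pose rotate (beta : assignment n H) := relabel beta (cycle3 x1 x2 x3).
have rotation_test y1 y2 y3 (beta : assignment n H) :
    (forall Q, margin Q beta (rotate beta) =
       vote (Q y1) a b + vote (Q y2) b c + vote (Q y3) c a) ->
    vote (P y1) a b + vote (P y2) b c + vote (P y3) c a \in [:: -1; 3].
  move=> test; apply: (@pm1_sum3_drop2 _ _ _
    (vote (P' y1) a b) (vote (P' y2) b c) (vote (P' y3) c a)).
  1-6: by apply: vote_pm1; [apply: vP' || apply: vP |].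
  - by have := defect_at y1 y2 y3; rewrite /vote_diff; lia.
  - by rewrite -!test margin_ge0_eq.
have t1 : vote (P x1) a b + vote (P x2) b c + vote (P x3) c a \in [:: -1; 3].
  apply: (rotation_test _ _ _ mu) => Q.
  by rewrite margin_cycle3 // mu1 mu2 mu3.
have t2 : vote (P x3) a b + vote (P x1) b c + vote (P x2) c a \in [:: -1; 3].
  apply: (rotation_test _ _ _ (rotate mu)) => Q.
  by rewrite margin_cycle3 // !asg_relabel s1 s2 s3 mu1 mu2 mu3; lia.
have t3 : vote (P x2) a b + vote (P x3) b c + vote (P x1) c a \in [:: -1; 3].
  apply: (rotation_test _ _ _ (rotate (rotate mu))) => Q.
  by rewrite margin_cycle3 // !asg_relabel !s1 !s2 !s3 ?s1 mu1 mu2 mu3; lia.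
move: t1 t2 t3 (cycle_vote1 x1) (cycle_vote1 x2) (cycle_vote1 x3); rewrite !inE.
lia.
Qed.

End SameMajorityGraph.

Section MajorityGraphDeterminesMargins.
Variables (n : nat) (H : finType).
Hypothesis card_H : #|H| = n.
Variables P P' : profile n H.
Hypotheses (vP : valid_profile P) (vP' : valid_profile P').
Hypothesis same_graph : forall mu lam, maj_edge P mu lam = maj_edge P' mu lam.

Lemma vote_diff_cycle x a b c :
  vote_diff P P' x a b + vote_diff P P' x b c + vote_diff P P' x c a = 0.
Proof.
have [<-|ab] := eqVneq a b.
  by rewrite vote_diff_refl add0r (vote_diffN _ _ x a c) addrN.
have [<-|bc] := eqVneq b c.
  by rewrite vote_diff_refl addr0 (vote_diffN _ _ x a b) addrN.
have [<-|ca] := eqVneq c a.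
  by rewrite vote_diff_refl addr0 (vote_diffN _ _ x c b) addrN.
have same_graph' mu lam : maj_edge P' mu lam = maj_edge P mu lam by [].
have := cycle_defect_neq2 card_H vP vP' same_graph x ab bc ca.
have := cycle_defect_neq2 card_H vP' vP same_graph' x ab bc ca.
have := vote_cycle (vP x) ab bc ca; have := vote_cycle (vP' x) ab bc ca.
rewrite /vote_diff; lia.
Qed.

Lemma vote_diff_potential : exists f : H -> int,
  forall x a b, vote_diff P P' x a b = f a - f b.
Proof.
case: (pickP (@predT 'I_n)) => [x0 _|no_agent]; last first.
  by exists (fun=> 0) => x; have := no_agent x.
pose h0 := asg (enum_asg card_H) x0.
exists (fun a => vote_diff P P' x0 a h0) => x a b.
rewrite (vote_diff_agent card_H vP vP' same_graph x x0).
have := vote_diff_cycle x0 a b h0; rewrite (vote_diffN _ _ x0 a h0); lia.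
Qed.

Lemma margin_eq mu lam : margin P mu lam = margin P' mu lam.
Proof.
have [f vote_diffE] := vote_diff_potential.
apply/eqP; rewrite -subr_eq0 !marginE -sumrB; apply/eqP.
transitivity (\sum_x (f (asg mu x) - f (asg lam x))).
  by apply: eq_bigr => x _; rewrite -(vote_diffE x).
by rewrite sumrB !(sum_asg card_H) subrr.
Qed.

Lemma Nset_card_eq mu lam : #|Nset P mu lam| = #|Nset P' mu lam|.
Proof.
have := margin_eq mu lam; have := Nset_cardD vP mu lam; have := Nset_cardD vP' mu lam.
rewrite /margin; lia.
Qed.

End MajorityGraphDeterminesMargins.

Definition count_determined n H (F : rule n H) : Prop :=
  forall P P' : profile n H, valid_profile P -> valid_profile P' ->
    (forall mu lam, #|Nset P mu lam| = #|Nset P' mu lam|) ->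
    forall mu, F P mu <-> F P' mu.

Lemma count_determined_majoritarian n (H : finType) (F : rule n H) :
  #|H| = n -> count_determined F -> majoritarian F.
Proof.
move=> card_H F_counts P P' vP vP' same_graph; apply: F_counts => // mu lam.
exact: Nset_card_eq.
Qed.

Lemma PO_count_determined n (H : finType) : count_determined (@PO n H).
Proof.
move=> P P' vP vP' counts mu.
suff dominated lam : pareto_dominates P lam mu <-> pareto_dominates P' lam mu.
  by split=> undominated [lam dom]; apply: undominated; exists lam; apply/dominated.
by rewrite (pareto_dominatesE vP) (pareto_dominatesE vP') !counts.
Qed.

Lemma least_unpopularity_count_determined n (H : finType) :
  count_determined (@least_unpopularity n H).
Proof.
move=> P P' _ _ counts mu.
have same_margin nu : unpopularity_margin P nu = unpopularity_margin P' nu.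
  by apply: eq_bigr => lam _; rewrite !counts.
by split=> least nu; [rewrite -!same_margin | rewrite !same_margin].
Qed.

Lemma mixed_popularity_count_determined (R : realFieldType) n (H : finType) :
  count_determined (@mixed_popularity n H R).
Proof.
move=> P P' _ _ counts mu.
have same_sum (pi : assignment n H -> R) lam :
    \sum_nu pi nu * (#|Nset P nu lam|%:R - #|Nset P lam nu|%:R) =
    \sum_nu pi nu * (#|Nset P' nu lam|%:R - #|Nset P' lam nu|%:R).
  by apply: eq_bigr => nu _; rewrite !counts.
split=> -[pi [[distr popular] pos]]; exists pi; split=> //; split=> // lam.
  by rewrite -same_sum.
by rewrite same_sum.
Qed.

Theorem corollary4p1 (R : realFieldType) (n : nat) (H : finType) :
  #|H| = n ->
  majoritarian (@PO n H) /\
  majoritarian (@least_unpopularity n H) /\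
  majoritarian (@mixed_popularity n H R).
Proof.
move=> card_H; split; [|split]; apply: count_determined_majoritarian => //.
- exact: PO_count_determined.
- exact: least_unpopularity_count_determined.
- exact: mixed_popularity_count_determined.
Qed.
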